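(* Let $1\le p\le q$, $n=p+q$, and let $\mu=(a_1,\dots,a_p\mid b_1,\dots,b_q)$ be a $\Delta^+(\mathfrak{k},\mathfrak{t})$-dominant weight with non-negative integer entries. Then the following are equivalent: (i) there exist $w\in W(\mathfrak{g},\mathfrak{t})^1$ and $1\le i\le n$ with $\langle\mu+2\rho_c,w\xi_i\rangle>2\langle\rho,\xi_i\rangle$ (i.e. $\mu$ is u-large); (ii) there exist $0\le f\le p$ and $0\le g\le q$ such that $$\sum_{i=1}^f a_i+\sum_{j=1}^g b_j>2pq-2(p-f)(q-g).$$
   Context: Weights are vectors in $\mathbb{R}^n$ written $(x_1,\dots,x_p\mid y_1,\dots,y_q)$ with the standard inner product. $\rho_c=(p,p-1,\dots,1\mid q,q-1,\dots,1)$, $\rho=(n,n-1,\dots,1)$, $\xi_i=e_1+\cdots+e_i$. A weight is $\Delta^+(\mathfrak{k},\mathfrak{t})$-dominant if $x_1\ge\cdots\ge x_p\ge0$ and $y_1\ge\cdots\ge y_q\ge0$. $W(\mathfrak{g},\mathfrak{t})$ is the group of signed permutations of the $n$ coordinates; $C_{\mathfrak{g}}=\{z\in\mathbb{R}^n: z_1\ge\cdots\ge z_n\ge0\}$, $C$ is the closed cone of $\Delta^+(\mathfrak{k},\mathfrak{t})$-dominant weights, and $W(\mathfrak{g},\mathfrak{t})^1=\{w\in W(\mathfrak{g},\mathfrak{t})\mid w(C_{\mathfrak{g}})\subset C\}$. A weight $\nu$ is u-small (lies in the unitarily small convex hull) iff $\langle\nu+2\rho_c,w\xi_i\rangle\le2\langle\rho,\xi_i\rangle$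 for all $1\le i\le n$ and all $w\in W(\mathfrak{g},\mathfrak{t})^1$; u-large means not u-small. *)

From HB Require Import structures.
From mathcomp Require Import all_boot all_order all_algebra all_fingroup.
From mathcomp Require Import reals.
 Unset Printing Implicit Defensive.
Import Order.TTheory GRing.Theory Num.Theory.
Local Open Scope ring_scope.

(* Weights in R^n are functions 'I_n -> R; coordinate k (0-based) is
   e_{k+1}.  With n = p + q, coordinates k < p are the x-part, k >= p the
   y-part. *)

Definition dotw (n : nat) (R : realType) (x y : 'I_n -> R) : R :=
  \sum_(k < n) x k * y k.

Definition rho_c (p q : nat) (R : realType) : 'I_(p + q) -> R :=
  fun k => if (k < p)%N then (p - k)%:R else (p + q - k)%:R.

Definition rho (n : nat) (R : realType) : 'I_n -> R := fun k => (n - k)%:R.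

Definition xi (n i : nat) (R : realType) : 'I_n -> R :=
  fun k => if (k < i)%N then 1 else 0.

(* W(g,t): signed permutations of the n coordinates, as maps on R^n *)
Definition signed_perm (n : nat) (R : realType)
    (w : ('I_n -> R) -> ('I_n -> R)) : Prop :=
  exists (s : 'S_n) (eps : 'I_n -> bool),
    forall (z : 'I_n -> R) (k : 'I_n), w z k = (-1) ^+ eps k * z (s k).

Definition in_Cg (n : nat) (R : realType) (z : 'I_n -> R) : Prop :=
  (forall i j : 'I_n, (i <= j)%N -> z j <= z i) /\ (forall i, 0 <= z i).

Definition k_dominant (p q : nat) (R : realType) (z : 'I_(p + q) -> R) : Prop :=
  (forall i j : 'I_(p + q), (i <= j)%N -> ((i < p) = (j < p))%N -> z j <= z i)
  /\ (forall i, 0 <= z i).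

Definition W1 (p q : nat) (R : realType)
    (w : ('I_(p + q) -> R) -> ('I_(p + q) -> R)) : Prop :=
  signed_perm (p + q) R w /\ forall z, in_Cg (p + q) R z -> k_dominant p q R (w z).

Definition weight_of (p q : nat) (R : realType) (a : 'I_p -> nat)
    (b : 'I_q -> nat) : 'I_(p + q) -> R :=
  fun k => match split k with inl i => (a i)%:R | inr j => (b j)%:R end.

Definition addw (n : nat) (R : realType) (x y : 'I_n -> R) : 'I_n -> R :=
  fun k => x k + y k.
Definition scalew (n : nat) (R : realType) (c : R) (x : 'I_n -> R) : 'I_n -> R :=
  fun k => c * x k.

(* Put c = mu + 2 rho_c: it is nonnegative and nonincreasing on each of the two
   blocks of coordinates.  For a signed permutation w, <c, w xi_i> is at most the
   sum of c over the i coordinates that w sends to the first i slots; if f of them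
   lie in the first block and g = i - f in the second, monotonicity bounds this by
   the sum of the first f entries of the first block and the first g entries of
   the second.  That bound is attained by the element of W^1 shuffling exactly
   these coordinates to the front.  In closed form the bound is
   sum a + sum b + f(2p - f + 1) + g(2q - g + 1), while
   2<rho, xi_(f+g)> = (f + g)(2n - f - g + 1), and their difference is the one in (ii). *)

From HB Require Import structures.
From mathcomp Require Import all_boot all_order all_algebra all_fingroup.
From mathcomp Require Import reals ring lra zify.
Import Order.TTheory GRing.Theory Num.Theory.
Local Open Scope ring_scope.

Set Implicit Arguments.
Unset Strict Implicit.

Section Sums.
Variable R : realType.

Lemma sum_double_sub (m f : nat) : (f <= m)%N ->
  \sum_(0 <= k < f) 2 * (m - k)%:R = f%:R * (2 * m%:R - f%:R + 1) :> R.
Proof.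
elim: f => [|f IH] lt_fm; first by rewrite big_geq // mul0r.
rewrite big_nat_recr //= (IH (ltnW lt_fm)) (natrB _ (ltnW lt_fm)) -addn1 natrD; ring.
Qed.

Lemma big_ord_prefix (G : nat -> R) (m f : nat) : (f <= m)%N ->
  \sum_(k < m | (k < f)%N) G k = \sum_(0 <= k < f) G k.
Proof. by move=> le_fm; rewrite (big_nat_widen 0 f m) // big_mkord. Qed.

Lemma count_sum_le (P : pred nat) (m : nat) : (\sum_(0 <= k < m | P k) 1 <= m)%N.
Proof.
elim: m => [|m IH]; first by rewrite big_geq.
by rewrite big_mkcond big_nat_recr //= -big_mkcond; case: (P m) => /=; lia.
Qed.

Lemma sum_nonincreasing_le_prefix_nat (c : nat -> R) (P : pred nat) (m : nat) :
  (forall i j, (i <= j)%N -> (j < m)%N -> c j <= c i) ->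
  \sum_(0 <= k < m | P k) c k <= \sum_(0 <= k < \sum_(0 <= k < m | P k) 1) c k.
Proof.
elim: m => [|m IH] c_noninc; first by rewrite !big_geq.
have {}IH := IH (fun i j le_ij lt_jm => c_noninc i j le_ij (ltnW lt_jm)).
rewrite big_mkcond big_nat_recr //= -big_mkcond.
rewrite [X in _ <= \sum_(0 <= k < X) _]big_mkcond big_nat_recr //= -big_mkcond.
case: (P m) => /=; last by rewrite addr0 addn0.
rewrite addn1 big_nat_recr //=; apply: lerD => //.
exact: c_noninc (count_sum_le _ _) _.
Qed.

Lemma sum_nonincreasing_le_prefix (m : nat) (c : 'I_m -> R) (P : pred 'I_m) :
  (forall i j : 'I_m, (i <= j)%N -> c j <= c i) ->
  \sum_(k < m | P k) c k <= \sum_(k < m | (k < #|P|)%N) c k.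
Proof.
move=> c_noninc.
pose cn k := if (insub k : option 'I_m) is Some o then c o else 0.
pose Pn k := if (insub k : option 'I_m) is Some o then P o else false.
have -> : \sum_(k < m | P k) c k = \sum_(0 <= k < m | Pn k) cn k.
  by rewrite big_mkord; apply: eq_big => k; rewrite /cn /Pn valK.
have -> : #|P| = (\sum_(0 <= k < m | Pn k) 1)%N.
  by rewrite -sum1_card big_mkord; apply: eq_bigl => k; rewrite /Pn valK.
rewrite (eq_bigr (cn \o val)) => [|k _]; last by rewrite /cn /= valK.
rewrite (big_ord_prefix cn) ?count_sum_le //.
apply: sum_nonincreasing_le_prefix_nat => i j le_ij lt_jm.
have lt_im := leq_ltn_trans le_ij lt_jm.
by rewrite /cn (insubT (fun k => k < m)%N lt_im) (insubT (fun k => k < m)%N lt_jm); apply: c_noninc.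
Qed.

Lemma prefix_sum_shifted (m f : nat) (d : 'I_m -> nat) : (f <= m)%N ->
  \sum_(k < m | (k < f)%N) ((d k)%:R + 2 * (m - k)%:R) =
  (\sum_(k < m | (k < f)%N) d k)%:R + f%:R * (2 * m%:R - f%:R + 1) :> R.
Proof.
move=> le_fm; rewrite big_split /= natr_sum.
by rewrite (big_ord_prefix (fun k : nat => 2 * (m - k)%:R)) // sum_double_sub.
Qed.

Lemma two_dotw_rho_xi (n i : nat) : (i <= n)%N ->
  2 * dotw n R (rho n R) (xi n i R) = i%:R * (2 * n%:R - i%:R + 1).
Proof.
move=> le_in; rewrite /dotw mulr_sumr.
transitivity (\sum_(k < n | (k < i)%N) 2 * (n - k)%:R : R).
  rewrite [RHS]big_mkcond; apply: eq_bigr => k _; rewrite /rho /xi.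
  by case: ifP => _; rewrite ?mulr1 ?mulr0.
by rewrite (big_ord_prefix (fun k : nat => 2 * (n - k)%:R)) // sum_double_sub.
Qed.

Lemma dotw_signed_perm_xi_le (m i : nat) (c : 'I_m -> R) (s : 'S_m)
    (eps : 'I_m -> bool) (w : ('I_m -> R) -> 'I_m -> R) :
  (forall k, 0 <= c k) -> (forall z k, w z k = (-1) ^+ eps k * z (s k)) ->
  dotw m R c (w (xi m i R)) <= \sum_(k < m | (s k < i)%N) c k.
Proof.
move=> c_ge0 wE; rewrite /dotw [X in _ <= X]big_mkcond; apply: ler_sum => k _.
rewrite wE /xi; have := c_ge0 k.
by case: ifP => _; case: (eps k); rewrite ?expr1 ?expr0; lra.
Qed.

Lemma dotw_perm_xi (m i : nat) (c : 'I_m -> R) (s : 'S_m) :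
  dotw m R c (fun k => xi m i R (s k)) = \sum_(k < m | (s k < i)%N) c k.
Proof.
rewrite /dotw [RHS]big_mkcond; apply: eq_bigr => k _ /=.
by rewrite /xi; case: ifP; rewrite ?mulr1 ?mulr0.
Qed.

End Sums.

Lemma card_perm_preim_lt (m i : nat) (s : 'S_m) : (i <= m)%N ->
  #|[pred k | (s k < i)%N]| = i.
Proof.
move=> le_im; rewrite -sum1_card.
rewrite -(reindex_inj (h := s) (P := fun k : 'I_m => (k < i)%N) (F := fun _ => 1%N) (@perm_inj _ s)).
rewrite -(big_mkord (fun k => k < i)%N (fun _ => 1%N)).
by rewrite -(big_nat_widen _ _ _ xpredT) // sum_nat_const_nat subn0 muln1.
Qed.

Section BlockWeights.
Variables (R : realType) (p q : nat).
Local Notation n := (p + q).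
Local Notation shifted_weight a b :=
  (addw n R (weight_of p q R a b) (scalew n R 2 (rho_c p q R))).

Lemma weight_of_lshift (a : 'I_p -> nat) (b : 'I_q -> nat) (k : 'I_p) :
  weight_of p q R a b (lshift q k) = (a k)%:R.
Proof. by rewrite /weight_of (unsplitK (inl k)). Qed.

Lemma weight_of_rshift (a : 'I_p -> nat) (b : 'I_q -> nat) (k : 'I_q) :
  weight_of p q R a b (rshift p k) = (b k)%:R.
Proof. by rewrite /weight_of (unsplitK (inr k)). Qed.

Lemma rho_c_lshift (k : 'I_p) : rho_c p q R (lshift q k) = (p - k)%:R.
Proof. by rewrite /rho_c /= ltn_ord. Qed.

Lemma rho_c_rshift (k : 'I_q) : rho_c p q R (rshift p k) = (q - k)%:R.
Proof. by rewrite /rho_c /= ltnNge leq_addr subnDl. Qed.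

Lemma k_dominant_addw (x y : 'I_n -> R) :
  k_dominant p q R x -> k_dominant p q R y -> k_dominant p q R (addw n R x y).
Proof.
move=> [x_noninc x_ge0] [y_noninc y_ge0]; split => [i j le_ij same_block | k].
  by apply: lerD; [exact: x_noninc | exact: y_noninc].
exact: addr_ge0.
Qed.

Lemma k_dominant_scalew (c : R) (x : 'I_n -> R) :
  0 <= c -> k_dominant p q R x -> k_dominant p q R (scalew n R c x).
Proof.
move=> c_ge0 [x_noninc x_ge0]; split => [i j le_ij same_block | k].
  by apply: ler_wpM2l => //; exact: x_noninc.
exact: mulr_ge0.
Qed.

Lemma k_dominant_rho_c : k_dominant p q R (rho_c p q R).
Proof.
split => [i j le_ij same_block | k]; last by rewrite /rho_c; case: ifP.
by rewrite /rho_c same_block; case: ifP => _; rewrite ler_nat leq_sub2l.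
Qed.

Lemma shifted_weight_lshift (a : 'I_p -> nat) (b : 'I_q -> nat) (k : 'I_p) :
  shifted_weight a b (lshift q k) = (a k)%:R + 2 * (p - k)%:R.
Proof. by rewrite /addw /scalew weight_of_lshift rho_c_lshift. Qed.

Lemma shifted_weight_rshift (a : 'I_p -> nat) (b : 'I_q -> nat) (k : 'I_q) :
  shifted_weight a b (rshift p k) = (b k)%:R + 2 * (q - k)%:R.
Proof. by rewrite /addw /scalew weight_of_rshift rho_c_rshift. Qed.

Lemma k_dominant_signed_perm_dotw_xi_le (c : 'I_n -> R) w (i : nat) :
  k_dominant p q R c -> signed_perm n R w -> (i <= n)%N ->
  exists f g, [/\ (f <= p)%N, (g <= q)%N, (f + g = i)%N &
    dotw n R c (w (xi n i R)) <=
    \sum_(k < p | (k < f)%N) c (lshift q k) + \sum_(k < q | (k < g)%N) c (rshift p k)].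
Proof.
move=> [c_noninc c_ge0] [s [eps wE]] le_in.
pose Px := [pred k : 'I_p | (s (lshift q k) < i)%N].
pose Py := [pred k : 'I_q | (s (rshift p k) < i)%N].
exists #|Px|, #|Py|; split.
- by rewrite -[X in (_ <= X)%N]card_ord max_card.
- by rewrite -[X in (_ <= X)%N]card_ord max_card.
- by rewrite -[RHS](card_perm_preim_lt s le_in) -!sum1_card big_split_ord.
apply: le_trans (dotw_signed_perm_xi_le i c_ge0 wE) _.
rewrite big_split_ord; apply: lerD; apply: sum_nonincreasing_le_prefix => i0 j0 le_ij.
  by apply: c_noninc; rewrite //= !ltn_ord.
by apply: c_noninc; rewrite /= ?leq_add2l // !ltnNge !leq_addr.
Qed.

Lemma W1_perm_monotone_in_blocks (s : 'S_n) :
  (forall i j : 'I_n, (i <= j)%N -> (i < p)%N = (j < p)%N -> (s i <= s j)%N) ->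
  W1 p q R (fun z k => z (s k)).
Proof.
move=> s_mono; split.
  by exists s, (fun _ => false) => z k; rewrite expr0 mul1r.
move=> z [z_noninc z_ge0]; split => [i j le_ij same_block | k]; last exact: z_ge0.
exact/z_noninc/s_mono.
Qed.

Lemma shuffle_perm (f g : nat) : (f <= p)%N -> (g <= q)%N ->
  exists s : 'S_n, [/\
    (forall i j : 'I_n, (i <= j)%N -> (i < p)%N = (j < p)%N -> (s i <= s j)%N),
    (forall k : 'I_p, (s (lshift q k) : nat) = if (k < f)%N then nat_of_ord k else (k + g)%N) &
    (forall k : 'I_q, (s (rshift p k) : nat) = if (k < g)%N then (f + k)%N else (p + k)%N)].
Proof.
move=> le_fp le_gq.
pose sn k := if (k < p)%N then (if (k < f)%N then k else k + g)%N
             else (if (k - p < g)%N then f + (k - p) else k)%N.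
have sn_lt (k : 'I_n) : (sn k < n)%N by case: k => k lt_kn; rewrite /sn /=; do ! case: ifP; lia.
have sn_inj : injective (fun k => Ordinal (sn_lt k)).
  move=> [x lt_xn] [y lt_yn] /(congr1 val) /=; rewrite /sn => sn_xy; apply: val_inj => /=.
  by move: sn_xy; do ! case: ifP; lia.
exists (perm sn_inj); split => [i j | k | k]; rewrite ?permE /= /sn.
- by do ! case: ifP; lia.
- by rewrite ltn_ord.
- by rewrite ltnNge leq_addr addKn.
Qed.

Lemma shuffle_dotw_xi (c : 'I_n -> R) (f g : nat) : (f <= p)%N -> (g <= q)%N ->
  exists2 w, W1 p q R w & dotw n R c (w (xi n (f + g) R)) =
    \sum_(k < p | (k < f)%N) c (lshift q k) + \sum_(k < q | (k < g)%N) c (rshift p k).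
Proof.
move=> le_fp le_gq; have [s [s_mono sl sr]] := shuffle_perm le_fp le_gq.
exists (fun z k => z (s k)); first exact: W1_perm_monotone_in_blocks.
rewrite dotw_perm_xi big_split_ord; congr (_ + _); apply: eq_bigl => k /=.
  by rewrite sl; case: ifP => lt_kf; apply/idP/idP; lia.
by rewrite sr; case: ifP => lt_kg; apply/idP/idP; lia.
Qed.

Lemma prefix_sums_shifted_weight (a : 'I_p -> nat) (b : 'I_q -> nat) (f g : nat) :
  (f <= p)%N -> (g <= q)%N ->
  \sum_(k < p | (k < f)%N) shifted_weight a b (lshift q k) +
  \sum_(k < q | (k < g)%N) shifted_weight a b (rshift p k) =
  (\sum_(k < p | (k < f)%N) a k)%:R + f%:R * (2 * p%:R - f%:R + 1) +
  ((\sum_(k < q | (k < g)%N) b k)%:R + g%:R * (2 * q%:R - g%:R + 1)).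
Proof.
move=> le_fp le_gq.
under eq_bigr do rewrite shifted_weight_lshift.
under [X in _ + X]eq_bigr do rewrite shifted_weight_rshift.
by rewrite !prefix_sum_shifted.
Qed.

End BlockWeights.

Lemma u_large_ineq_real (R : realType) (p q f g sa sb : nat) :
  (2 * p%:Z * q%:Z - 2 * (p%:Z - f%:Z) * (q%:Z - g%:Z) < (sa + sb)%N%:Z)%R <->
  (f + g)%N%:R * (2 * (p + q)%N%:R - (f + g)%N%:R + 1) <
    sa%:R + f%:R * (2 * p%:R - f%:R + 1) + (sb%:R + g%:R * (2 * q%:R - g%:R + 1)) :> R.
Proof.
rewrite -(ltr_int R) !(rmorphB, rmorphM) /= -!pmulrn !natrD.
have gap : sa%:R + f%:R * (2 * p%:R - f%:R + 1) + (sb%:R + g%:R * (2 * q%:R - g%:R + 1)) -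
    (f%:R + g%:R) * (2 * (p%:R + q%:R) - (f%:R + g%:R) + 1) =
  sa%:R + sb%:R - (2 * p%:R * q%:R - 2 * (p%:R - f%:R) * (q%:R - g%:R)) :> R by ring.
by split => ?; lra.
Qed.

Theorem proposition2p2 (R : realType) (p q : nat) (a : 'I_p -> nat)
    (b : 'I_q -> nat) :
  (1 <= p)%N -> (p <= q)%N ->
  k_dominant p q R (weight_of p q R a b) ->
  (exists (w : ('I_(p + q) -> R) -> ('I_(p + q) -> R)) (i : nat),
      [/\ W1 p q R w, (1 <= i)%N, (i <= p + q)%N &
        dotw (p + q) R (addw (p + q) R (weight_of p q R a b) (scalew (p + q) R 2 (rho_c p q R))) (w (xi (p + q) i R))
        > 2 * dotw (p + q) R (rho (p + q) R) (xi (p + q) i R)])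
  <->
  (exists f g : nat,
      [/\ (f <= p)%N, (g <= q)%N &
        ((\sum_(i < p | (i < f)%N) a i + \sum_(j < q | (j < g)%N) b j)%:Z
         > 2 * p%:Z * q%:Z - 2 * (p%:Z - f%:Z) * (q%:Z - g%:Z))%R]).
Proof.
move=> _ _ mu_dom; set c := addw (p + q) R _ _.
have c_dom : k_dominant p q R c.
  exact: k_dominant_addw mu_dom (k_dominant_scalew (ler0n R 2) (k_dominant_rho_c R p q)).
split.
- case=> w [i [[w_sp _] _ le_in large]].
  have [f [g [le_fp le_gq fg_i dot_le]]] := k_dominant_signed_perm_dotw_xi_le c_dom w_sp le_in.
  exists f, g; split => //; apply/(u_large_ineq_real R).
  rewrite prefix_sums_shifted_weight // in dot_le.
  by subst i; rewrite two_dotw_rho_xi // in large; lra.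
- case=> f [g [le_fp le_gq large]].
  have fg_gt0 : (0 < f + g)%N.
    rewrite lt0n addn_eq0; apply: contraTN large => /andP[/eqP-> /eqP->].
    by rewrite !big_pred0 // !subr0 subrr ltxx.
  have [w w_W1 dotE] := shuffle_dotw_xi c le_fp le_gq.
  exists w, (f + g)%N; split => //; first exact: leq_add.
  rewrite dotE prefix_sums_shifted_weight // two_dotw_rho_xi ?leq_add //.
  exact/(u_large_ineq_real R).
Qed.
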